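(* Let $q$ be an odd prime power, $d$ a positive integer, and $\varphi_d$ the coloring defined below. If $s_1,\dots,s_t \in (\mathbb{F}_q^* )^d$ form a $t$-falling star under $\varphi_d$ (with the labeling in the definition below), then $s_1,\dots,s_{t-1}$ are linearly independent. Consequently, for every nonempty finite subset $T \subseteq (\mathbb{F}_q^* )^d$, $\mathrm{rk}(T) \ge \mathrm{FS}(T) - 1$. Moreover, if there exist a vector $v \in (\mathbb{F}_q^* )^d\setminus T$ and a color $\gamma$ with $\varphi_d(v,x)=\gamma$ for all $x \in T$, then $\mathrm{rk}(T) \ge \mathrm{FS}(T)$.
   Context: $\mathbb{F}_q^*$ is the set of nonzero elements of $\mathbb{F}_q$, endowed with an arbitrary fixed linear order; $(\mathbb{F}_q^* )^d$ is ordered lexicographically with respect to it. Let $C_d = \mathrm{DOT} \sqcup \mathrm{ZERO}\sqcup\mathrm{UP}\sqcup\mathrm{DOWN}$, where $\mathrm{DOT} = \mathbb{F}_q^*$ and ZERO, UP, DOWN are three disjoint copies of $\{1,\dots,d\}\times \mathbb{F}_q$. For distinct $x<y$ in $(\mathbb{F}_q^* )^d$, let $i$ be the first coordinate where $x$ and $y$ differ, and $x\cdot y$ the standard dot product; $\varphi_d(x,y)=\varphi_d(y,x)$ is $(i,x_i+y_i)$ in ZERO if $x\cdot y=0$; $(i,x_i+y_i)$ in UP if $x\cdot y\ne 0$ and $x\cdot y=x\cdot x$; $(i,x_i+y_i)$ in DOWN if $x\cdot y\notin\{0,x\cdot x\}$ and $x\cdot y=y\cdot y$; and $x\cdot y\in\mathrm{DOT}$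 otherwise. Distinct vectors $s_1,\dots,s_t$ form a $t$-falling star under $\varphi_d$ if there are colors $\alpha_2,\dots,\alpha_t$ with $\varphi_d(s_i,s_j) = \alpha_i$ for all $1 \le j < i \le t$. $\mathrm{FS}(T)$ is the maximum $t$ such that $T$ contains a $t$-falling star. $\mathrm{rk}(T)$ is the dimension of the linear span of $T$. *)

From HB Require Import structures.
From mathcomp Require Import all_boot all_order all_algebra.
From mathcomp Require Import boolp.
Set Implicit Arguments. Unset Strict Implicit. Unset Printing Implicit Defensive.
Import GRing.Theory.
Local Open Scope ring_scope.

Section Defs.
Variables (F : finFieldType) (d : nat).

(* Colors C_d = DOT ⊔ ZERO ⊔ UP ⊔ DOWN, DOT = F_q^x, the others {1..d} x F_q *)
Inductive color :=
  | Dot of F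
  | Zero of 'I_d & F
  | Up of 'I_d & F
  | Down of 'I_d & F.

(* vectors of (F_q)^d are row vectors; (F_q^x)^d = all entries nonzero *)
Definition nzvec (x : 'rV[F]_d) : bool := [forall i, x 0 i != 0].

Definition dot (x y : 'rV[F]_d) : F := \sum_(i < d) x 0 i * y 0 i.

Definition firstdiff (x y : 'rV[F]_d) : option 'I_d :=
  [pick i : 'I_d | (x 0 i != y 0 i) &&
                   [forall j : 'I_d, (j < i)%N ==> (x 0 j == y 0 j)]].

(* lt : the fixed linear (strict) order on F_q^x; (F_q^x)^d is ordered
   lexicographically, so for x <> y the smaller one is the one with the
   lt-smaller entry at the first differing coordinate. *)
Definition phi (lt : rel F) (x y : 'rV[F]_d) : color :=
  match firstdiff x y with
  | None => Dot 0 (* x = y: unused junk value *)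
  | Some i =>
      let a := if lt (x 0 i) (y 0 i) then x else y in
      let b := if lt (x 0 i) (y 0 i) then y else x in
      let c := x 0 i + y 0 i in
      if dot a b == 0 then Zero i c
      else if dot a b == dot a a then Up i c
      else if dot a b == dot b b then Down i c
      else Dot (dot a b)
  end.

(* s_1..s_t (indexed 0..t-1) form a t-falling star *)
Definition falling_star (lt : rel F) (t : nat) (s : 'I_t -> 'rV[F]_d) : Prop :=
  injective s /\ (forall i, nzvec (s i)) /\
  exists alpha : 'I_t -> color,
    forall i j : 'I_t, (j < i)%N -> phi lt (s i) (s j) = alpha i.

Definition star_in (lt : rel F) (T : {set 'rV[F]_d}) (t : nat) : Prop :=
  exists s : 'I_t -> 'rV[F]_d, falling_star lt s /\ forall i, s i \in T.

Definition FS (lt : rel F) (T : {set 'rV[F]_d}) : nat :=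
  \max_(t < #|T|.+1 | `[< star_in lt T t >]) t.

Definition rk (T : {set 'rV[F]_d}) : nat := \dim <<enum T>>%VS.

End Defs.

Definition linear_order_on_units (F : finFieldType) (lt : rel F) : Prop :=
  [/\ forall a, ~~ lt a a,
      forall a b c, lt a b -> lt b c -> lt a c &
      forall a b, a != 0 -> b != 0 -> a != b -> lt a b || lt b a].

(* Every colour c = phi x y comes with a linear form l, namely <x, .> for a DOT
   colour and the i-th coordinate for a ZERO/UP/DOWN colour with index i, and a
   value b, both depending on x and c only, such that l y = b but l x <> b, and
   b <> 0 when y has no zero entry.  Let s_1, ..., s_k be the bottom of a falling
   star and u a vector seeing all of them in one colour (u = s_(k+1), or the
   extra vector v).  The form of u takes the same nonzero value on every s_j, so
   a relation s_k = sum_(j<k) c_j s_j must have sum_j c_j = 1; but then the form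
   of s_k, constant on s_1, ..., s_(k-1), would take that constant at s_k too.
   Hence s_k is not in the span of s_1, ..., s_(k-1). *)

From Pilot Require Import Defs.
From HB Require Import structures.
From mathcomp Require Import all_boot all_order all_algebra.
From mathcomp Require Import boolp.
Import GRing.Theory.
Local Open Scope ring_scope.
Set Implicit Arguments. Unset Strict Implicit.

Section Coloring.
Variables (F : finFieldType) (d : nat) (lt : rel F).
Implicit Types x y u w : 'rV[F]_d.

Lemma dotC x y : dot x y = dot y x.
Proof. by apply: eq_bigr => i _; rewrite mulrC. Qed.

Lemma dot_deltal p y : dot (delta_mx 0 p) y = y 0 p.
Proof.
rewrite /dot (bigD1 p) //= mxE !eqxx mul1r big1 ?addr0 // => i /negbTE nip.
by rewrite mxE nip andbF mul0r.
Qed.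

Lemma dot_sumr u n (c : 'I_n -> F) (v : 'I_n -> 'rV[F]_d) :
  dot u (\sum_(i < n) c i *: v i) = \sum_(i < n) c i * dot u (v i).
Proof.
rewrite /dot; under eq_bigr => j _ do rewrite summxE mulr_sumr.
rewrite exchange_big; apply: eq_bigr => i _; rewrite mulr_sumr.
by apply: eq_bigr => j _; rewrite mxE mulrCA.
Qed.

Lemma firstdiffP x y : x != y -> exists2 i, firstdiff x y = Some i & x 0 i != y 0 i.
Proof.
move=> nxy; rewrite /firstdiff; case: pickP => [i /andP[nei _]|none]; first by exists i.
have [i0 nei0] : exists i, x 0 i != y 0 i.
  apply/existsP; apply: contraR nxy => /existsPn eqxy.
  by apply/eqP/rowP => i; apply/eqP; rewrite -[_ == _]negbK eqxy.
case: (@arg_minnP _ i0 (fun i => x 0 i != y 0 i) val nei0) => i nei imin.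
have := none i.
rewrite nei /= => /negbT/forallPn[j]; rewrite negb_imply => /andP[lt_ji nej].
by have := imin j nej; rewrite leqNgt lt_ji.
Qed.

Variant phi_spec x y : color F d -> Prop :=
  | PhiDot of dot x y != 0 & dot x y != dot x x : phi_spec x y (Defs.Dot d (dot x y))
  | PhiZero p of x 0 p != y 0 p : phi_spec x y (Zero p (x 0 p + y 0 p))
  | PhiUp p of x 0 p != y 0 p : phi_spec x y (Up p (x 0 p + y 0 p))
  | PhiDown p of x 0 p != y 0 p : phi_spec x y (Down p (x 0 p + y 0 p)).

Lemma phiP x y : x != y -> phi_spec x y (phi lt x y).
Proof.
move=> nxy; have [i fd nei] := firstdiffP nxy; rewrite /phi fd.
case: (lt (x 0 i) (y 0 i)); rewrite ?[dot y x]dotC.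
- case: ifP => [_|/negbT nz]; first exact: PhiZero.
  case: ifP => [_|/negbT nxx]; first exact: PhiUp.
  by case: ifP => _; [exact: PhiDown | exact: PhiDot].
- case: ifP => [_|/negbT nz]; first exact: PhiZero.
  case: ifP => _; first exact: PhiUp.
  by case: ifP => [_|/negbT nxx]; [exact: PhiDown | exact: PhiDot].
Qed.

Definition color_form x (c : color F d) : 'rV[F]_d :=
  match c with
  | Defs.Dot _ => x
  | Zero p _ | Up p _ | Down p _ => delta_mx 0 p
  end.

Definition color_value x (c : color F d) : F :=
  match c with
  | Defs.Dot e => e
  | Zero p e | Up p e | Down p e => e - x 0 p
  end.

Lemma phi_form x y (c := phi lt x y) : x != y ->
  [/\ dot (color_form x c) y = color_value x c,
      dot (color_form x c) x != color_value x c &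
      nzvec y -> color_value x c != 0].
Proof.
move=> /phiP; rewrite {}/c; case=> [nz nxx|p nep|p nep|p nep] /=.
- by rewrite eq_sym.
all: rewrite !dot_deltal (addrC (x 0 p)) addrK; split=> // /forallP; exact.
Qed.

Lemma dot_const_span (X : seq 'rV[F]_d) w u u' b a :
  b != 0 -> {in w :: X, forall x, dot u x = b} -> {in X, forall x, dot u' x = a} ->
  w \in <<X>>%VS -> dot u' w = a.
Proof.
move=> b_neq0 ub u'a wX.
have [c wE] : exists c : 'I_(size X) -> F, w = \sum_i c i *: X`_i.
  by exists (coord (in_tuple X) ^~ w); apply: coord_span.
have X_X (i : 'I_(size X)) : X`_i \in X by rewrite mem_nth.
have c_sum1 : \sum_i c i = 1.
  apply: (mulIf b_neq0); rewrite mul1r -{2}(ub w (mem_head _ _)) {1}wE dot_sumr.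
  by rewrite mulr_suml; apply: eq_bigr => i _; rewrite ub // inE X_X orbT.
rewrite wE dot_sumr (eq_bigr (fun i => c i * a)) => [|i _]; last by rewrite u'a.
by rewrite -mulr_suml c_sum1 mul1r.
Qed.

Lemma phi_const_form (X : seq 'rV[F]_d) u x0 : x0 \in X -> u \notin X ->
    {in X &, forall y z, phi lt u y = phi lt u z} ->
  {in X, forall x, dot (color_form u (phi lt u x0)) x = color_value u (phi lt u x0)}.
Proof.
move=> x0X uNX u_const x xX; rewrite (u_const x0 x) //.
have uNx : u != x by apply: contraNneq uNX => ->.
by case: (phi_form uNx).
Qed.

Lemma falling_step X w u : nzvec w -> w \notin X -> u \notin w :: X ->
  {in X &, forall y z, phi lt w y = phi lt w z} ->
  {in w :: X &, forall y z, phi lt u y = phi lt u z} ->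
  w \notin <<X>>%VS.
Proof.
move=> nz_w wNX uNwX w_const u_const; apply/negP => wX.
have u_aff := phi_const_form (mem_head w X) uNwX u_const.
have uNw : u != w by apply: contraNneq uNwX => ->; apply: mem_head.
have [_ _ /(_ nz_w) b_neq0] := phi_form uNw.
case: X wNX w_const wX u_aff {uNwX u_const} => [|x X] wNX w_const wX u_aff.
  have w0 : dot (color_form u (phi lt u w)) w = 0.
    exact: (dot_const_span b_neq0 u_aff).
  by rewrite -(u_aff w (mem_head _ _)) w0 eqxx in b_neq0.
have wNx : w != x by apply: contraNneq wNX => ->; apply: mem_head.
have [_ wa _] := phi_form wNx.
apply/negP: wa; rewrite negbK; apply/eqP/(dot_const_span b_neq0 u_aff _ wX).
exact: phi_const_form (mem_head x X) wNX w_const.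
Qed.

(* A falling star listed from its top element down: each vector sees all the
   later ones in a single colour. *)
Fixpoint falling_seq (S : seq 'rV[F]_d) : Prop :=
  if S is x :: S' then {in S' &, forall y z, phi lt x y = phi lt x z} /\ falling_seq S'
  else True.

Lemma falling_free u S : uniq (u :: S) -> all (@nzvec F d) S -> falling_seq (u :: S) -> free S.
Proof.
elim: S u => [|w X IH] u; first by rewrite nil_free.
move=> /andP[uNwX uniq_wX] /andP[nz_w nz_X] [u_const [w_const fall_X]].
rewrite free_cons (IH w) // andbT.
by apply: (falling_step (u := u)) => //; case/andP: uniq_wX.
Qed.

Lemma falling_seq_star t (s : 'I_t -> 'rV[F]_d) (alpha : 'I_t -> color F d) :
    (forall i j : 'I_t, (j < i)%N -> phi lt (s i) (s j) = alpha i) ->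
  forall L, sorted (fun i j : 'I_t => (j < i)%N) L -> falling_seq (map s L).
Proof.
move=> star; elim=> [//|i L IH] /=.
rewrite path_sortedE => [/andP[/allP L_lt_i /IH fall_L]|]; last first.
  by move=> ? ? ? /[swap]; apply: ltn_trans.
split=> // _ _ /mapP[j jL ->] /mapP[k kL ->].
by rewrite !star ?L_lt_i.
Qed.

Lemma enum_ord_split n :
  enum 'I_n.+1 = rcons [seq i : 'I_n.+1 <- enum 'I_n.+1 | (i < n)%N] ord_max.
Proof.
rewrite enum_ordSr filter_rcons /= ltnn (all_filterP _) //.
by apply/allP => _ /mapP[j _ ->] /=.
Qed.

Lemma size_enum_ord_prefix n : size [seq i : 'I_n.+1 <- enum 'I_n.+1 | (i < n)%N] = n.
Proof.
by apply: succn_inj; rewrite -(size_rcons _ ord_max) -enum_ord_split size_enum_ord.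
Qed.

Lemma sorted_rev_enum_ord n : sorted (fun i j : 'I_n => (j < i)%N) (rev (enum 'I_n)).
Proof.
by rewrite rev_sorted; have := iota_ltn_sorted 0 n; rewrite -val_enum_ord sorted_map.
Qed.

Lemma falling_star_seq t (s : 'I_t -> 'rV[F]_d) : falling_star lt s ->
  [/\ uniq (map s (rev (enum 'I_t))), all (@nzvec F d) (map s (rev (enum 'I_t))) &
      falling_seq (map s (rev (enum 'I_t)))].
Proof.
move=> [inj_s [nz_s [alpha star]]]; split.
- by rewrite (map_inj_uniq inj_s) rev_uniq enum_uniq.
- by apply/allP => _ /mapP[i _ ->].
- exact: falling_seq_star star _ (sorted_rev_enum_ord t).
Qed.

Lemma falling_star_prefix_free t (s : 'I_t -> 'rV[F]_d) : falling_star lt s ->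
  free [seq s i | i : 'I_t <- enum 'I_t & (i < t.-1)%N].
Proof.
case: t s => [|t] s star; first by rewrite enum_ord0 nil_free.
have [uniq_S nz_S fall_S] := falling_star_seq star.
rewrite enum_ord_split rev_rcons /= map_rev in uniq_S nz_S fall_S.
rewrite -(perm_free (permEl (perm_rev _))).
by apply: falling_free uniq_S _ fall_S; case/andP: nz_S.
Qed.

Lemma falling_star_free_below t (s : 'I_t -> 'rV[F]_d) v gamma : falling_star lt s ->
  (forall i, v != s i) -> (forall i, phi lt v (s i) = gamma) -> free (map s (enum 'I_t)).
Proof.
move=> star vNs v_const; have [uniq_S nz_S fall_S] := falling_star_seq star.
rewrite -(perm_free (permEl (perm_rev _))) -map_rev.
apply: (falling_free (u := v)) => //=; last first.
  by split=> // _ _ /mapP[i _ ->] /mapP[j _ ->]; rewrite !v_const.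
by rewrite uniq_S andbT; apply/mapP => -[i _ /eqP]; rewrite (negbTE (vNs i)).
Qed.

Lemma free_size_le_rk (X : seq 'rV[F]_d) (T : {set 'rV[F]_d}) :
  free X -> {subset X <= T} -> (size X <= rk T)%N.
Proof. by move=> /eqP <- XT; apply/dimvS/sub_span => x /XT; rewrite mem_enum. Qed.

End Coloring.

Theorem corollary3p5 (F : finFieldType) (d : nat) (lt : rel F) :
  odd #|F| -> (0 < d)%N -> linear_order_on_units lt ->
  [/\ (forall (t : nat) (s : 'I_t -> 'rV[F]_d), falling_star lt s ->
         free [seq s i | i : 'I_t <- enum 'I_t & (i < t.-1)%N]),
      (forall T : {set 'rV[F]_d}, T != set0 -> {subset T <= nzvec (d:=d)} ->
         (FS lt T - 1 <= rk T)%N) &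
      (forall T : {set 'rV[F]_d}, T != set0 -> {subset T <= nzvec (d:=d)} ->
         forall (v : 'rV[F]_d) (gamma : color F d),
           nzvec v -> v \notin T -> (forall x, x \in T -> phi lt v x = gamma) ->
           (FS lt T <= rk T)%N)].
Proof.
move=> _ _ _; split.
- by move=> t s; apply: falling_star_prefix_free.
- move=> T _ _; rewrite leq_subLR; apply/bigmax_leqP => -[[|t] _] //= /asboolP[s [star sT]].
  rewrite add1n ltnS -[X in (X <= _)%N](size_enum_ord_prefix t) -(size_map s).
  apply: free_size_le_rk (falling_star_prefix_free star) _.
  by move=> _ /mapP[i _ ->]; apply: sT.
- move=> T _ _ v gamma _ vNT v_const.
  apply/bigmax_leqP => -[t _] /= /asboolP[s [star sT]].
  rewrite -[X in (X <= _)%N]size_enum_ord -(size_map s).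
  have vNs i : v != s i by apply: contraNneq vNT => ->.
  apply: free_size_le_rk (falling_star_free_below star vNs (fun i => v_const _ (sT i))) _.
  by move=> _ /mapP[i _ ->]; apply: sT.
Qed.
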